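(* Let $\Omega$ be a finite set and $f:2^{\Omega}\to\mathbb{R}$ increasing with $f(\emptyset)=0$. Then the multilinear extension $F^M$ of $f$ is $\left(|\Omega|(|\Omega|^{3/2}-1)2^{|\Omega|-4}D[f]\right)$-up-concave.
   Context: Multilinear extension: $F^M(x)=\sum_{\mathcal{S}\subseteq\Omega}f(\mathcal{S})\prod_{i\in\mathcal{S}}x_i\prod_{i\notin\mathcal{S}}(1-x_i)$ for $x\in[0,1]^{|\Omega|}$. $D[f]=\max\{f(\mathcal{A}\cup\mathcal{B}\cup\{s\})-f(\mathcal{A}\cup\mathcal{B})-f(\mathcal{A}\cup\{s\})+f(\mathcal{A}):\mathcal{A},\mathcal{B}\subseteq\Omega,s\in\Omega,|\mathcal{A}|\le|\Omega|-1\}$. $F:[0,1]^n\to\mathbb{R}$ is $\epsilon$-up-concave ($\epsilon\ge0$) if for every $u\in\mathbb{R}^n_{+}$, $x\in[0,1]^n$, the function $G_{x,u}(t)=F(tu+x)$ satisfies $G_{x,u}(\lambda t_1+(1-\lambda)t_2)\ge\lambda G_{x,u}(t_1)+(1-\lambda)G_{x,u}(t_2)-\epsilon$ for all $\lambda\in[0,1]$ and $t_1,t_2\in\mathbb{R}$ such that $t_1u+x$, $t_2u+x$, and $x+\lambda t_1u+(1-\lambda)t_2u$ lie in $[0,1]^n$. *)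

From mathcomp Require Import all_boot all_order all_algebra.
From mathcomp Require Import reals.
Set Implicit Arguments. Unset Strict Implicit. Unset Printing Implicit Defensive.
Import Order.TTheory GRing.Theory Num.Theory.
Local Open Scope ring_scope.

Section Defs.
Variables (R : realType) (Omega : finType).

Definition increasing_set_fun (f : {set Omega} -> R) : Prop :=
  forall A B : {set Omega}, A \subset B -> f A <= f B.

Definition multilinear_ext (f : {set Omega} -> R) (x : Omega -> R) : R :=
  \sum_(S : {set Omega})
     f S * (\prod_(i in S) x i) * (\prod_(i in ~: S) (1 - x i)).

(* D[f] : maximum over A, B subsets of Omega, s in Omega, |A| <= |Omega| - 1.
   The neutral element 0 is harmless: the term with B = set0 equals 0, so the
   max is >= 0 whenever the index set is nonempty. *)
Definition Dmax (f : {set Omega} -> R) : R :=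
  \big[Num.max/0]_(A : {set Omega} | (#|A| <= #|Omega| - 1)%N)
   \big[Num.max/0]_(B : {set Omega})
    \big[Num.max/0]_(s : Omega)
      (f (A :|: B :|: [set s]) - f (A :|: B) - f (A :|: [set s]) + f A).

Definition in_cube (x : Omega -> R) : Prop := forall i, 0 <= x i <= 1.

Definition up_concave (eps : R) (F : (Omega -> R) -> R) : Prop :=
  forall (u x : Omega -> R), (forall i, 0 <= u i) -> in_cube x ->
  let G := fun t : R => F (fun i => t * u i + x i) in
  forall (lam t1 t2 : R), 0 <= lam <= 1 ->
    in_cube (fun i => t1 * u i + x i) ->
    in_cube (fun i => t2 * u i + x i) ->
    in_cube (fun i => x i + lam * t1 * u i + (1 - lam) * t2 * u i) ->
    G (lam * t1 + (1 - lam) * t2) >= lam * G t1 + (1 - lam) * G t2 - eps.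
End Defs.

(* F^M is affine in each coordinate; its slope in coordinate i is the multilinear
   extension of the marginal S |-> f(S + i) - f(S - i), whose own slopes in the
   coordinates j <> i are second differences of f, hence at most D[f].  Points
   t u + x along a direction u >= 0 are comparable, so take y <= z.  Moving
   coordinate i of both y and z to the mixed value lam y_i + (1 - lam) z_i changes
   the concavity defect by lam (1 - lam) (z_i - y_i) times the increase of the
   i-th slope between the moved points, which is at most (k - 1) D[f] when y and z
   differ in k coordinates.  Induction on k bounds the defect by D[f] n (n - 1) / 8,
   which is below the stated constant. *)

From mathcomp Require Import all_boot all_order all_algebra.
From mathcomp Require Import reals ring lra.
Set Implicit Arguments. Unset Strict Implicit. Unset Printing Implicit Defensive.
Import Order.TTheory GRing.Theory Num.Theory.
Local Open Scope ring_scope.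

Lemma big_pair_setU1 (T : Type) (idx : T) (op : Monoid.com_law idx)
    (Omega : finType) (i : Omega) (F : {set Omega} -> T) :
  \big[op/idx]_(S : {set Omega}) F S =
  \big[op/idx]_(S : {set Omega} | i \notin S) op (F S) (F (i |: S)).
Proof.
rewrite (bigID [pred S : {set Omega} | i \notin S]) /= big_split /=; congr (op _ _).
rewrite (reindex_onto (fun S => i |: S) (fun S => S :\ i)) /=; last first.
  by move=> S; rewrite negbK => /setD1K.
apply: eq_bigl => S; rewrite setU11 /=.
have [iS|/setU1K ->] := boolP (i \in S); last by rewrite eqxx.
by apply/negbTE/eqP => /setP/(_ i); rewrite !inE eqxx iS.
Qed.

Lemma convex_mem01 (R : realFieldType) (lam a b : R) :
  0 <= lam <= 1 -> 0 <= a <= 1 -> 0 <= b <= 1 ->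
  0 <= lam * a + (1 - lam) * b <= 1.
Proof.
move=> /andP[lam0 lam1] /andP[a0 a1] /andP[b0 b1].
have : 0 <= lam * a by rewrite mulr_ge0.
have : 0 <= (1 - lam) * b by rewrite mulr_ge0 // subr_ge0.
have : lam * a <= lam by rewrite ler_piMr.
have : (1 - lam) * b <= 1 - lam by rewrite ler_piMr // subr_ge0.
by move=> *; apply/andP; split; lra.
Qed.

Lemma mix_weight_le (R : realFieldType) (lam a : R) :
  0 <= lam <= 1 -> 0 <= a <= 1 -> lam * (1 - lam) * a <= 1 / 4.
Proof.
move=> /andP[lam0 lam1] /andP[a0 a1].
have lam_quarter : lam * (1 - lam) <= 1 / 4.
  by have := sqr_ge0 (lam - 1 / 2); rewrite expr2; lra.
by apply: le_trans lam_quarter; rewrite ler_piMr // mulr_ge0 // subr_ge0.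
Qed.

Lemma exprz2_sub4_ge (R : realFieldType) (n : nat) :
  (0 < n)%N -> 1 / 8 <= (2 : R) ^ (n%:Z - 4).
Proof.
move=> n0; apply: le_trans (ler_weXz2l _ (_ : - 3%:Z <= n%:Z - 4)); last 2 first.
- by rewrite ler1n.
- by rewrite lerBrDr; case: n n0.
by rewrite -exprnN div1r -natrX.
Qed.

Lemma defect_bound_le_constant (R : rcfType) (n : nat) (D : R) : 0 <= D ->
  D * (n%:R * (n%:R - 1)) / 8 <= (n%:R * (n%:R * Num.sqrt n%:R - 1) * 2 ^ (n%:Z - 4)) * D.
Proof.
move=> D0; case: n => [|n]; first by rewrite !mul0r mulr0 mul0r.
have := @exprz2_sub4_ge R n.+1 isT; set N : R := n.+1%:R; set p := _ ^ _ => p8.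
have N1 : 1 <= N by rewrite ler1n.
have sqrtN1 : 1 <= Num.sqrt N by rewrite -sqrtr1 ler_wsqrtr.
have NsqrtN : N - 1 <= N * Num.sqrt N - 1 by rewrite lerD2r ler_peMr // (le_trans ler01).
have key : (N - 1) * (1 / 8) <= (N * Num.sqrt N - 1) * p by apply: ler_pM => //; lra.
have ND0 : 0 <= N * D by rewrite mulr_ge0 // (le_trans ler01).
have -> : D * (N * (N - 1)) / 8 = N * D * ((N - 1) * (1 / 8)) by ring.
have -> : N * (N * Num.sqrt N - 1) * p * D = N * D * ((N * Num.sqrt N - 1) * p) by ring.
exact: ler_wpM2l.
Qed.

Section Multilinear.
Variables (R : realType) (Omega : finType).
Implicit Types (f g h : {set Omega} -> R) (x y z : Omega -> R) (i j s : Omega).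
Implicit Types (A B K S : {set Omega}) (c D lam : R).

Definition marginal (i : Omega) g S := g (i |: S) - g (S :\ i).

Definition coweight (i : Omega) S x :=
  \prod_(k in S) x k * \prod_(k in ~: (i |: S)) (1 - x k).

Lemma coweight_upd i S x c :
  i \notin S -> coweight i S [eta x with i |-> c] = coweight i S x.
Proof.
move=> iS; congr (_ * _); apply: eq_bigr => k /=.
  by case: eqP => // ->; rewrite (negbTE iS).
by rewrite !inE negb_or => /andP[/negbTE ->].
Qed.

Lemma multilinear_ext_pivot g x i :
  multilinear_ext g x = \sum_(S : {set Omega} | i \notin S)
    coweight i S x * ((1 - x i) * g S + x i * g (i |: S)).
Proof.
rewrite /multilinear_ext (big_pair_setU1 _ i); apply: eq_bigr => S iS.
rewrite big_setU1 //= [\prod_(k in ~: S) _](bigD1 i) ?inE //=.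
have -> : \prod_(k in ~: S | k != i) (1 - x k) = \prod_(k in ~: (i |: S)) (1 - x k).
  by apply: eq_bigl => k; rewrite !inE negb_or andbC.
rewrite /coweight; ring.
Qed.

Lemma marginal_notin i g S : i \notin S -> marginal i g S = g (i |: S) - g S.
Proof. by move=> iS; rewrite /marginal (setDidPl _) // disjoint_sym disjoints1. Qed.

Lemma marginal_setU1 i g S : marginal i g (i |: S) = marginal i g S.
Proof. by rewrite /marginal setUA setUid setDUl setDv set0U. Qed.

Lemma multilinear_ext_marginal g x i :
  multilinear_ext (marginal i g) x =
  \sum_(S : {set Omega} | i \notin S) coweight i S x * (g (i |: S) - g S).
Proof.
rewrite (multilinear_ext_pivot _ _ i); apply: eq_bigr => S iS.
by rewrite marginal_setU1 marginal_notin //; congr (_ * _); ring.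
Qed.

Lemma multilinear_ext_upd_sub g x i a :
  multilinear_ext g x - multilinear_ext g [eta x with i |-> a] =
  (x i - a) * multilinear_ext (marginal i g) [eta x with i |-> a].
Proof.
rewrite !(multilinear_ext_pivot g _ i) multilinear_ext_marginal -sumrB mulr_sumr.
by apply: eq_bigr => S iS; rewrite coweight_upd //= eqxx; ring.
Qed.

Lemma multilinear_ext_ext g x y : x =1 y -> multilinear_ext g x = multilinear_ext g y.
Proof.
by move=> xy; apply: eq_bigr => S _; congr (_ * _ * _); apply: eq_bigr => k _; rewrite xy.
Qed.

Lemma ler_multilinear_ext g h x :
  in_cube x -> (forall S, g S <= h S) -> multilinear_ext g x <= multilinear_ext h x.
Proof.
move=> cx gh; apply: ler_sum => S _; rewrite -!mulrA ler_wpM2r ?gh //.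
by apply: mulr_ge0; apply: prodr_ge0 => k _; have := cx k; lra.
Qed.

Lemma multilinear_ext_cst c x : multilinear_ext (fun _ => c) x = c.
Proof.
rewrite /multilinear_ext; under eq_bigr do rewrite -mulrA; rewrite -mulr_sumr.
suff -> : \sum_(S : {set Omega}) \prod_(k in S) x k * \prod_(k in ~: S) (1 - x k) = 1.
  by rewrite mulr1.
transitivity (\prod_k (x k + (1 - x k))); last by rewrite big1 // => k _; rewrite subrKC.
rewrite bigA_distr; apply: eq_bigr => S _; rewrite big_if.
by congr (_ * _); apply: eq_bigl => k; rewrite inE.
Qed.

Lemma multilinear_ext_le g x c :
  in_cube x -> (forall S, g S <= c) -> multilinear_ext g x <= c.
Proof. by move=> cx gc; rewrite -(multilinear_ext_cst c x); apply: ler_multilinear_ext. Qed.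

Lemma le_Dmax f A B s : (#|A| <= #|Omega| - 1)%N ->
  f (A :|: B :|: [set s]) - f (A :|: B) - f (A :|: [set s]) + f A <= Dmax f.
Proof.
move=> cardA; apply: le_trans (le_bigmax_cond _ _ cardA).
by apply: le_trans (le_bigmax _ _ B); apply: le_bigmax.
Qed.

Lemma Dmax_ge0 f : 0 <= Dmax f.
Proof. exact: bigmax_ge_id. Qed.

Lemma marginal2_le_Dmax f i j S : i != j -> marginal j (marginal i f) S <= Dmax f.
Proof.
move=> ij; set A := S :\ j :\ i.
have cardA : (#|A| <= #|Omega| - 1)%N.
  by rewrite subn1 -(cardsC1 i) subset_leq_card // subsetDr.
have e1 : i |: (j |: S) = A :|: [set i] :|: [set j].
  by apply/setP => k; rewrite !inE; case: (k == i); case: (k == j); case: (k \in S).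
have e2 : (j |: S) :\ i = A :|: [set j].
  apply/setP => k; rewrite !inE; have [->|_] := eqVneq k j; first by rewrite eq_sym ij orbT.
  by case: (k == i); case: (k \in S).
have e3 : i |: (S :\ j) = A :|: [set i].
  by apply/setP => k; rewrite !inE; case: (k == i); case: (k == j); case: (k \in S).
have := le_Dmax f [set i] j cardA.
by rewrite /marginal e1 e2 e3; lra.
Qed.

Lemma in_cube_upd x i c : in_cube x -> 0 <= c <= 1 -> in_cube [eta x with i |-> c].
Proof. by move=> cx c01 k /=; case: eqP. Qed.

Lemma multilinear_ext_sub_le g D K y z : 0 <= D ->
  (forall j S, j \in K -> marginal j g S <= D) ->
  in_cube y -> in_cube z -> (forall k, y k <= z k) -> (forall k, k \notin K -> y k = z k) ->
  multilinear_ext g z - multilinear_ext g y <= D * #|K|%:R.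
Proof.
move=> D0 gD cy; move nK: #|K| => n.
elim: n K z nK gD => [|n IH] K z nK gD cz yz yzK.
  rewrite mulr0 (multilinear_ext_ext _ (y := y)) ?subrr // => k.
  by rewrite yzK // (cards0_eq nK) inE.
have [j jK] : exists j, j \in K by apply/set0Pn; rewrite -card_gt0 nK.
pose z' := [eta z with j |-> y j].
have cz' : in_cube z' by apply: in_cube_upd.
have z'y : multilinear_ext g z' - multilinear_ext g y <= D * n%:R.
  apply: (IH (K :\ j)) => // [|k S /setD1P[_]|k|k]; first by rewrite (cardsD1 j) jK in nK; case: nK.
  - exact: gD.
  - by rewrite /z' /=; case: eqP => // ->.
  - by rewrite !inE negb_and negbK /z' /=; case: eqP => [->|_ /yzK].
have zz' : multilinear_ext g z - multilinear_ext g z' <= D.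
  rewrite multilinear_ext_upd_sub.
  have := multilinear_ext_le cz' (fun S => gD j S jK).
  by have := yz j; have := cy j; have := cz j; nra.
by rewrite -natr1 mulrDr mulr1; lra.
Qed.

Definition concavity_defect f lam y z :=
  lam * multilinear_ext f y + (1 - lam) * multilinear_ext f z
  - multilinear_ext f (fun k => lam * y k + (1 - lam) * z k).

Lemma concavity_defect_pivot f lam y z i :
  let m := lam * y i + (1 - lam) * z i in
  let y' := [eta y with i |-> m] in let z' := [eta z with i |-> m] in
  concavity_defect f lam y z = concavity_defect f lam y' z'
    + lam * (1 - lam) * (z i - y i)
      * (multilinear_ext (marginal i f) z' - multilinear_ext (marginal i f) y').
Proof.
move=> m y' z'; rewrite /concavity_defect.
have -> : multilinear_ext f (fun k => lam * y' k + (1 - lam) * z' k) =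
          multilinear_ext f (fun k => lam * y k + (1 - lam) * z k).
  by apply: multilinear_ext_ext => k /=; case: eqP => // ->; rewrite /m; ring.
rewrite -[multilinear_ext f y](subrK (multilinear_ext f y')).
rewrite -[multilinear_ext f z](subrK (multilinear_ext f z')) !multilinear_ext_upd_sub.
by rewrite /m; ring.
Qed.

Lemma concavity_defect_le f D lam K y z : 0 <= D -> 0 <= lam <= 1 ->
  (forall i j S, i != j -> marginal j (marginal i f) S <= D) ->
  in_cube y -> in_cube z -> (forall k, y k <= z k) -> (forall k, k \notin K -> y k = z k) ->
  concavity_defect f lam y z <= D * (#|K|%:R * (#|K|%:R - 1)) / 8.
Proof.
move=> D0 lam01 fD; move nK: #|K| => n.
elim: n K y z nK => [|n IH] K y z nK cy cz yz yzK.
  have zy : z =1 y by move=> k; rewrite yzK // (cards0_eq nK) inE.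
  rewrite /concavity_defect (multilinear_ext_ext _ zy) (multilinear_ext_ext _ (y := y)).
    by rewrite !mul0r mulr0 mul0r; lra.
  by move=> k /=; rewrite zy; ring.
have [i iK] : exists i, i \in K by apply/set0Pn; rewrite -card_gt0 nK.
rewrite (concavity_defect_pivot f lam y z i) /=.
set m := lam * y i + (1 - lam) * z i.
set y' := [eta y with i |-> m]; set z' := [eta z with i |-> m].
have m01 : 0 <= m <= 1 by apply: convex_mem01.
have cy' : in_cube y' by apply: in_cube_upd.
have cz' : in_cube z' by apply: in_cube_upd.
have yz' : forall k, y' k <= z' k by move=> k /=; case: eqP.
have yzK' : forall k, k \notin K :\ i -> y' k = z' k.
  by move=> k; rewrite !inE negb_and negbK /=; case: eqP => [//|_ /yzK].
have nK' : #|K :\ i| = n by rewrite (cardsD1 i) iK in nK; case: nK.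
have IHi := IH _ _ _ nK' cy' cz' yz' yzK'.
have mono : multilinear_ext (marginal i f) z' - multilinear_ext (marginal i f) y' <= D * n%:R.
  rewrite -nK'; apply: multilinear_ext_sub_le => // j S /setD1P[ji _].
  by apply: fD; rewrite eq_sym.
set q := lam * (1 - lam) * (z i - y i).
have q0 : 0 <= q by rewrite /q !mulr_ge0 ?subr_ge0 //; case/andP: lam01.
have q1 : q <= 1 / 4.
  apply: mix_weight_le => //; move: (yz i) (cy i) (cz i) => ? /andP[? ?] /andP[? ?].
  by apply/andP; split; lra.
have Dn0 : 0 <= D * n%:R by rewrite mulr_ge0.
have := ler_wpM2l q0 mono; have := ler_wpM2r Dn0 q1.
have -> : D * (n.+1%:R * (n.+1%:R - 1)) / 8 = D * (n%:R * (n%:R - 1)) / 8 + 1 / 4 * (D * n%:R).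
  by rewrite -natr1; field.
lra.
Qed.

Lemma concavity_defectC f lam y z :
  concavity_defect f lam y z = concavity_defect f (1 - lam) z y.
Proof.
rewrite /concavity_defect (@multilinear_ext_ext f (fun k => (1 - lam) * z k + _)
  (fun k => lam * y k + (1 - lam) * z k)); last by move=> k; ring.
ring.
Qed.

Lemma concavity_defect_le_Dmax f lam y z : 0 <= lam <= 1 -> in_cube y -> in_cube z ->
  (forall k, y k <= z k) \/ (forall k, z k <= y k) ->
  concavity_defect f lam y z <= Dmax f * (#|Omega|%:R * (#|Omega|%:R - 1)) / 8.
Proof.
wlog yz : lam y z / forall k, y k <= z k.
  move=> wlog_yz lam01 cy cz [yz|zy]; first by apply: wlog_yz => //; left.
  rewrite concavity_defectC; apply: wlog_yz => //; last by left.
  by case/andP: lam01 => ? ?; apply/andP; split; lra.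
move=> lam01 cy cz _; rewrite -cardsT.
apply: concavity_defect_le yz _ => //; first exact: Dmax_ge0.
- by move=> i j S; apply: marginal2_le_Dmax.
- by move=> k; rewrite inE.
Qed.

End Multilinear.

Theorem mainTheorem8 (R : realType) (Omega : finType) (f : {set Omega} -> R) :
  increasing_set_fun f -> f set0 = 0 ->
  up_concave
    ((#|Omega|%:R * (#|Omega|%:R * Num.sqrt (#|Omega|%:R) - 1)
       * (2 : R) ^ (#|Omega|%:Z - 4)) * Dmax f)
    (multilinear_ext f).
Proof.
move=> _ _ u x u0 _ G lam t1 t2 lam01 c1 c2 _; rewrite /G.
set y := fun k => t1 * u k + x k; set z := fun k => t2 * u k + x k.
have yz : (forall k, y k <= z k) \/ (forall k, z k <= y k).
  by case: (leP t1 t2) => [t12|/ltW t21]; [left|right] => k; rewrite lerD2r ler_wpM2r.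
have mix : multilinear_ext f (fun k => lam * y k + (1 - lam) * z k) =
            multilinear_ext f (fun k => (lam * t1 + (1 - lam) * t2) * u k + x k).
  by apply: multilinear_ext_ext => k; rewrite /y /z; ring.
have := concavity_defect_le_Dmax f lam01 c1 c2 yz; rewrite /concavity_defect mix.
by have := defect_bound_le_constant #|Omega| (Dmax_ge0 f); lra.
Qed.
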